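(* Let $n\ge1$, let $L\subseteq\mathbb Z^n$ be a lattice, and let $(\cdot,\cdot)$ be an inner product on $\mathbb R^n$ for which the canonical basis $\vec e_1,\dots,\vec e_n$ is orthogonal, such that $(L,(\cdot,\cdot))$ is a zonotopal lattice. Let $F$ be the span of $L$, let $\pi:\mathbb R^n\to F$ be the $(\cdot,\cdot)$-orthogonal projection, and let $Y=(\pi(\vec e_1),\dots,\pi(\vec e_n))$. Then the oriented matroids $\mathcal M(L)$ and $\mathcal M(Y)$ coincide, i.e. $$\{(\operatorname{sgn}v_1,\dots,\operatorname{sgn}v_n):\vec v\in L\}=\{(\operatorname{sgn}f(\pi(\vec e_1)),\dots,\operatorname{sgn}f(\pi(\vec e_n))): f:F\to\mathbb R\text{ linear}\}.$$
   Context: A lattice $L\subseteq\mathbb Z^n$ is the $\mathbb Z$-span of finitely many linearly independent vectors of $\mathbb Z^n$. The support of $\vec v$ is $\underline{\vec v}=\{i:v_i\ne0\}$. A vector $\vec u\in L$ is elementary if $\vec u\in\{-1,0,+1\}^n\setminus\{\vec 0\}$ and no nonzero vector of $L$ has support strictly contained in $\underline{\vec u}$. $(L,(\cdot,\cdot))$ is a zonotopal lattice if every $\vec v\in L\setminus\{\vec0\}$ has an elementary $\vec u\in L$ with $\underline{\vec u}\subseteq\underline{\vec v}$. The oriented matroid $\mathcal M(L)$ has covectors the sign vectors of vectors of $L$; the oriented matroid $\mathcal M(Y)$ of a vector configuration $Y=(\vec y_1,\dots,\vec y_n)$ has covectors $(\operatorname{sgn}f(\vec y_1),\dots,\operatorname{sgn}f(\vec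 y_n))$ for linear functionals $f$; two oriented matroids coincide if their covector sets are equal. *)

From HB Require Import structures.
From mathcomp Require Import all_boot all_order all_algebra.
From mathcomp Require Import reals.
Set Implicit Arguments. Unset Strict Implicit. Unset Printing Implicit Defensive.
Import Order.TTheory GRing.Theory Num.Theory.
Local Open Scope ring_scope.

(* A lattice L ⊆ Z^n is given by a generator matrix B whose k rows are
   Z-linearly independent; L = { u *m B | u ∈ Z^k }. *)
Definition Zindep (k n : nat) (B : 'M[int]_(k, n)) : Prop :=
  forall u : 'rV[int]_k, u *m B = 0 -> u = 0.

Definition inL (k n : nat) (B : 'M[int]_(k, n)) (v : 'rV[int]_n) : Prop :=
  exists u : 'rV[int]_k, v = u *m B.

Definition supp (n : nat) (v : 'rV[int]_n) : {set 'I_n} := [set i | v 0 i != 0].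

Definition elementary (k n : nat) (B : 'M[int]_(k, n)) (u : 'rV[int]_n) : Prop :=
  [/\ inL B u,
      (forall i, u 0 i \in [:: -1; 0; 1]),
      u != 0 &
      ~ (exists w : 'rV[int]_n, [/\ inL B w, w != 0 & supp w \proper supp u])].

Definition zonotopal_lattice (k n : nat) (B : 'M[int]_(k, n)) : Prop :=
  forall v : 'rV[int]_n, inL B v -> v != 0 ->
    exists u : 'rV[int]_n, elementary B u /\ supp u \subset supp v.

Definition ip (R : realType) (n : nat) (G : 'M[R]_n) (x y : 'rV[R]_n) : R :=
  (x *m G *m y^T) 0 0.

Definition orth_basis_inner_product (R : realType) (n : nat) (G : 'M[R]_n) : Prop :=
  [/\ G^T = G,
      (forall x : 'rV[R]_n, x != 0 -> 0 < ip G x x) &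
      (forall i j : 'I_n, i != j -> ip G (delta_mx 0 i) (delta_mx 0 j) = 0)].

Definition e_ (R : realType) (n : nat) (i : 'I_n) : 'rV[R]_n := delta_mx 0 i.

Definition inF (R : realType) (k n : nat) (B : 'M[int]_(k, n)) (x : 'rV[R]_n) : Prop :=
  exists a : 'rV[R]_k, x = a *m map_mx (fun z : int => z%:~R) B.

Definition orth_proj (R : realType) (k n : nat) (B : 'M[int]_(k, n)) (G : 'M[R]_n)
  (pi : 'rV[R]_n -> 'rV[R]_n) : Prop :=
  (forall x, inF B (pi x)) /\
  (forall x z, inF B z -> ip G (x - pi x) z = 0).

(* f is (the restriction to F of) a linear functional F -> R *)
Definition linear_on_F (R : realType) (k n : nat) (B : 'M[int]_(k, n))
  (f : 'rV[R]_n -> R) : Prop :=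
  forall (a : R) x y, inF B x -> inF B y -> f (a *: x + y) = a * f x + f y.

Definition covector_L (k n : nat) (B : 'M[int]_(k, n)) (s : {ffun 'I_n -> int}) : Prop :=
  exists v : 'rV[int]_n, inL B v /\ s = [ffun i => sgz (v 0 i)].

Definition covector_Y (R : realType) (k n : nat) (B : 'M[int]_(k, n))
  (Y : 'I_n -> 'rV[R]_n) (s : {ffun 'I_n -> int}) : Prop :=
  exists f : 'rV[R]_n -> R, linear_on_F B f /\ s = [ffun i => sgz (f (Y i))].

From HB Require Import structures.
From mathcomp Require Import all_boot all_order all_algebra.
From mathcomp Require Import reals lra.
Set Implicit Arguments. Unset Strict Implicit. Unset Printing Implicit Defensive.
Import Order.TTheory GRing.Theory Num.Theory.
Local Open Scope ring_scope.

(* Since the canonical basis is orthogonal, the Gram matrix G is diagonal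
   with positive diagonal.  Every linear functional f on F is (., w) for some
   w in F, and then f (pi e_i) = (e_i, w) = G_ii w_i: the covectors of Y are
   the sign vectors of the vectors of F.  As F is the real span of the integer
   lattice L, each such sign vector is already a sign vector of L: the integer
   vectors of L vanishing wherever w vanishes still span w, and rounding a
   large multiple of the coefficients of w in that span gives a lattice vector
   with the signs of w. *)

Lemma rat_mx_clear_denominators m n (K : 'M[rat]_(m, n)) :
  exists2 D : int, 0 < D & exists P : 'M[int]_(m, n), map_mx intr P = D%:~R *: K.
Proof.
pose d (p : 'I_m * 'I_n) := denq (K p.1 p.2).
exists (\prod_p d p); first by apply: prodr_gt0 => p _; rewrite denq_gt0.
exists (\matrix_(i, j) (numq (K i j) * \prod_(p | p != (i, j)) d p)).
apply/matrixP => i j; rewrite !mxE rmorphM /= numqE.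
rewrite [X in _ = X%:~R * _](bigD1 (i, j)) //= rmorphM /=.
by rewrite [RHS]mulrC mulrA.
Qed.

Lemma map_ratr_intr (R : numFieldType) m n (A : 'M[int]_(m, n)) :
  map_mx ratr (map_mx intr A) = map_mx intr A :> 'M[R]_(m, n).
Proof. by apply/matrixP => i j; rewrite !mxE ratr_int. Qed.

Lemma int_kermx (R : numFieldType) m n (C : 'M[int]_(m, n)) :
  exists2 P : 'M[int]_m, P *m C = 0 &
    (kermx (map_mx intr C : 'M[R]_(m, n)) <= map_mx intr P)%MS.
Proof.
have [D D_gt0 [P defP]] := rat_mx_clear_denominators (kermx (map_mx intr C : 'M[rat]_(m, n))).
exists P.
  have : map_mx intr (P *m C) = 0 :> 'M[rat]_(m, n).
    by rewrite map_mxM defP -scalemxAl mulmx_ker scaler0.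
  move/matrixP=> PC0; apply/matrixP => i j; apply: (@intr_inj rat).
  by have := PC0 i j; rewrite !mxE.
have D_neq0 : (D%:~R : R) != 0 by rewrite intr_eq0 gt_eqF.
have -> : map_mx intr P = D%:~R *: kermx (map_mx intr C) :> 'M[R]_m.
  by rewrite -map_ratr_intr defP map_mxZ /= ratr_int map_kermx map_ratr_intr.
by rewrite eqmx_scale.
Qed.

Lemma int_span_within_support (R : numFieldType) k n (B : 'M[int]_(k, n))
    (w : 'rV[R]_n) :
  (w <= map_mx intr B)%MS ->
  exists P : 'M[int]_k, (w <= map_mx intr (P *m B))%MS /\
    forall i, w 0 i = 0 -> forall j, (P *m B) j i = 0.
Proof.
case/submxP=> a def_w.
(* [C] keeps the columns of [B] where [w] vanishes: [a] lies in its real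
   kernel, and integer kernel vectors [P] make [P *m B] vanish there. *)
pose C := B *m diag_mx (\row_i ((w 0 i == 0)%:R : int)).
have [P PC0 kerP] := int_kermx R C.
exists P; split.
  have /submxP[y def_a] : (a <= map_mx intr P)%MS.
    apply: submx_trans kerP; apply/sub_kermxP/rowP => i.
    rewrite map_mxM map_diag_mx mulmxA -def_w mul_mx_diag !mxE.
    by case: eqP => [->|_]; rewrite ?mul0r ?mulr0.
  by rewrite def_w def_a map_mxM -mulmxA submxMl.
move=> i wi0 j; move/matrixP: PC0 => /(_ j i).
by rewrite /C mulmxA mul_mx_diag !mxE wi0 eqxx mulr1.
Qed.

Lemma sgz_near (R : realDomainType) (a b : R) : `|a - b| < `|b| -> sgz a = sgz b.
Proof.
rewrite ltr_norml; case: (ltrgt0P b) => b0 /andP[h1 h2].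
- by rewrite (gtr0_sgz b0) gtr0_sgz //; lra.
- by rewrite (ltr0_sgz b0) ltr0_sgz //; lra.
- by exfalso; move: h1 h2; rewrite b0; lra.
Qed.

Section Rounding.
Variables (R : archiRealFieldType) (k n : nat) (Q : 'M[int]_(k, n)).

Lemma floor_row_mulmx_dist (x : 'rV[R]_k) i :
  `|(x *m map_mx intr Q) 0 i - (((\row_j Num.floor (x 0 j)) *m Q) 0 i)%:~R|
    <= \sum_j `|((Q j i)%:~R : R)|.
Proof.
rewrite !mxE rmorph_sum -sumrB; apply: le_trans (ler_norm_sum _ _ _) (ler_sum _ _).
move=> j _; rewrite !mxE rmorphM -mulrBl normrM ler_piMl //.
by have := floor_itv (x 0 j); rewrite intrD ler_norml => /andP[? ?]; apply/andP; split; lra.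
Qed.

Lemma int_row_sgz_within_support (w : 'rV[R]_n) :
  (w <= map_mx intr Q)%MS -> (forall i, w 0 i = 0 -> forall j, Q j i = 0) ->
  exists z : 'rV[int]_k, forall i, sgz ((z *m Q) 0 i) = sgz (w 0 i).
Proof.
case/submxP=> y def_w suppQ.
pose M i : R := \sum_j `|((Q j i)%:~R : R)|.
(* The indices with [w 0 i = 0] contribute [M i / 0 = 0]. *)
pose N := 1 + \sum_i M i / `|w 0 i|.
have N_gt0 : 0 < N by rewrite ltr_pwDl ?sumr_ge0 // => i _; rewrite divr_ge0 ?sumr_ge0.
exists (\row_j Num.floor ((N *: y) 0 j)) => i.
have [wi0|wi_neq0] := eqVneq (w 0 i) 0.
  by rewrite wi0 mxE big1 ?sgz0 // => j _; rewrite suppQ // mulr0.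
have w_gt0 : 0 < `|w 0 i| by rewrite normr_gt0.
have M_lt : M i < `|N * w 0 i|.
  have rest_ge0 : 0 <= \sum_(j | j != i) M j / `|w 0 j|.
    by apply: sumr_ge0 => j _; rewrite divr_ge0 ?sumr_ge0.
  rewrite normrM gtr0_norm // -ltr_pdivrMr // /N (bigD1 i) //=; lra.
rewrite -(sgz_int R) -[sgz (w 0 i)]mul1r -(gtr0_sgz N_gt0) -sgzM.
apply: sgz_near; rewrite distrC; apply: le_lt_trans M_lt.
by have := floor_row_mulmx_dist (N *: y) i; rewrite -scalemxAl -def_w mxE.
Qed.

End Rounding.

Lemma int_row_sgz (R : archiRealFieldType) k n (B : 'M[int]_(k, n)) (w : 'rV[R]_n) :
  (w <= map_mx intr B)%MS ->
  exists u : 'rV[int]_k, forall i, sgz ((u *m B) 0 i) = sgz (w 0 i).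
Proof.
case/int_span_within_support=> P [wP suppP].
have [z sgz_z] := int_row_sgz_within_support wP suppP.
by exists (z *m P) => i; rewrite -mulmxA.
Qed.

Lemma inFP (R : realType) k n (B : 'M[int]_(k, n)) (x : 'rV[R]_n) :
  inF B x <-> (x <= map_mx intr B)%MS.
Proof. by split=> [[a ->]|/submxP[a ->]]; [exact: submxMl | exists a]. Qed.

Lemma covector_L_sgzP (R : realType) k n (B : 'M[int]_(k, n)) s :
  covector_L B s <->
  exists2 w : 'rV[R]_n, inF B w & s = [ffun i => sgz (w 0 i)].
Proof.
split=> [[v [[u def_v] ->]]|[w /inFP/int_row_sgz[u sgz_u] ->]].
  exists (map_mx intr v); first by exists (map_mx intr u); rewrite def_v map_mxM.
  by apply/ffunP => i; rewrite !ffunE mxE sgz_int.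
by exists (u *m B); split; [exists u | apply/ffunP => i; rewrite !ffunE sgz_u].
Qed.

Lemma linear_on_F_sum (R : realType) k n (B : 'M[int]_(k, n)) (f : 'rV[R]_n -> R)
    (I : finType) (c : I -> R) (v : I -> 'rV[R]_n) :
  linear_on_F B f -> (forall i, inF B (v i)) ->
  f (\sum_i c i *: v i) = \sum_i c i * f (v i).
Proof.
move=> f_lin vF.
have F0 : inF B (0 : 'rV[R]_n) by exists 0; rewrite mul0mx.
have f0 : f 0 = 0.
  by have := f_lin 1 0 0 F0 F0; rewrite scaler0 addr0 mul1r; lra.
suff [] : inF B (\sum_i c i *: v i) /\ f (\sum_i c i *: v i) = \sum_i c i * f (v i).
  by [].
elim/big_rec2: _ => [|i x r _ [xF <-]]; first by split.
split; last by rewrite f_lin.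
by move/inFP: xF => xF; apply/inFP; rewrite addmx_sub ?scalemx_sub //; apply/inFP.
Qed.

Section InnerProduct.
Variables (R : realType) (n : nat) (G : 'M[R]_n).

Lemma ip_linear_l a x y z : ip G (a *: x + y) z = a * ip G x z + ip G y z.
Proof. by rewrite /ip !mulmxDl -!scalemxAl !mxE. Qed.

Lemma ipBl x y z : ip G (x - y) z = ip G x z - ip G y z.
Proof. by rewrite -scaleN1r addrC ip_linear_l mulN1r addrC. Qed.

Lemma ip_suml (I : finType) (c : I -> R) (v : I -> 'rV[R]_n) z :
  ip G (\sum_i c i *: v i) z = \sum_i c i * ip G (v i) z.
Proof.
by rewrite /ip !mulmx_suml summxE; apply: eq_bigr => i _; rewrite -!scalemxAl mxE.
Qed.

Hypothesis G_ip : orth_basis_inner_product G.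

Lemma ipC x y : ip G x y = ip G y x.
Proof.
case: G_ip => G_sym _ _.
have -> : ip G x y = ((x *m G *m y^T)^T) 0 0 by rewrite mxE.
by rewrite !trmx_mul trmxK G_sym mulmxA.
Qed.

Lemma ip_e_e i j : ip G (e_ R i) (e_ R j) = G i j.
Proof. by rewrite /ip /e_ -rowE trmx_delta -colE !mxE. Qed.

Lemma G_diag_gt0 i : 0 < G i i.
Proof.
case: G_ip => _ G_pos _; rewrite -ip_e_e G_pos //.
by apply/eqP => /matrixP/(_ 0 i); rewrite /e_ !mxE !eqxx => /eqP; rewrite oner_eq0.
Qed.

Lemma ipE x y : ip G x y = \sum_i x 0 i * G i i * y 0 i.
Proof.
case: G_ip => _ _ G_orth.
rewrite /ip !mxE; apply: eq_bigr => j _; rewrite !mxE (bigD1 j) //= big1 ?addr0 //.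
by move=> i ij; rewrite -ip_e_e G_orth ?mulr0.
Qed.

Lemma ip_e i z : ip G (e_ R i) z = G i i * z 0 i.
Proof.
rewrite ipE (bigD1 i) //= big1 ?addr0 => [|j ji]; first by rewrite mxE !eqxx mul1r.
by rewrite mxE (negbTE ji) mul0r mul0r.
Qed.

End InnerProduct.

Section Projection.
Variables (R : realType) (n k : nat) (B : 'M[int]_(k, n)) (G : 'M[R]_n).
Variable pi : 'rV[R]_n -> 'rV[R]_n.
Hypotheses (G_ip : orth_basis_inner_product G) (pi_proj : orth_proj B G pi).

Lemma orth_proj_unique x p q :
  inF B p -> inF B q ->
  (forall z, inF B z -> ip G (x - p) z = 0) ->
  (forall z, inF B z -> ip G (x - q) z = 0) -> p = q.
Proof.
move=> /inFP pF /inFP qF p_orth q_orth.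
have dF : inF B (p - q) by apply/inFP; rewrite addmx_sub ?eqmx_opp.
have : ip G (p - q) (p - q) = 0.
  have d_eq : x - q - (x - p) = p - q by rewrite opprB addrC addrA subrK.
  by rewrite -{1}d_eq ipBl p_orth // q_orth // subr0.
case: G_ip => _ G_pos _; apply: contra_eq; rewrite -subr_eq0.
by move/G_pos; rewrite lt0r => /andP[].
Qed.

Lemma proj_inF x : inF B (pi x).
Proof. by case: pi_proj. Qed.

Lemma proj_orth x z : inF B z -> ip G (x - pi x) z = 0.
Proof. by case: pi_proj => _; apply. Qed.

Lemma inF_proj_e_decomp y : inF B y -> y = \sum_i y 0 i *: pi (e_ R i).
Proof.
move=> yF; apply: (orth_proj_unique (x := y)) => // [|z _|z zF].
- by apply/inFP/summx_sub => i _; apply/scalemx_sub/inFP/proj_inF.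
- by rewrite subrr /ip !mul0mx mxE.
have -> : y - \sum_i y 0 i *: pi (e_ R i) = \sum_i y 0 i *: (e_ R i - pi (e_ R i)).
  by rewrite {1}(row_sum_delta y) -sumrB; apply: eq_bigr => i _; rewrite scalerBr.
by rewrite ip_suml big1 // => i _; rewrite proj_orth ?mulr0.
Qed.

Lemma ip_proj_e i w : inF B w -> ip G (pi (e_ R i)) w = G i i * w 0 i.
Proof.
move=> wF; have := proj_orth (e_ R i) wF.
by rewrite ipBl (ip_e G_ip) => /eqP; rewrite subr_eq0 => /eqP <-.
Qed.

Lemma linear_on_F_riesz f :
  linear_on_F B f -> exists2 w, inF B w & forall x, inF B x -> f x = ip G x w.
Proof.
move=> f_lin; pose w' := \row_j (f (pi (e_ R j)) / G j j).
exists (pi w'); first exact: proj_inF.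
move=> x xF; have := proj_orth w' xF; rewrite ipBl => /eqP; rewrite subr_eq0 => /eqP.
rewrite (ipC G_ip x) => <-.
rewrite (ipE G_ip) {1}(inF_proj_e_decomp xF).
rewrite (linear_on_F_sum _ f_lin) => [|j]; last exact: proj_inF.
apply: eq_bigr => j _.
by rewrite mxE divfK ?(mulrC (x 0 j)) // gt_eqF // (G_diag_gt0 G_ip).
Qed.

Lemma covector_Y_sgzP s :
  covector_Y B (fun i => pi (e_ R i)) s <->
  exists2 w : 'rV[R]_n, inF B w & s = [ffun i => sgz (w 0 i)].
Proof.
have sgz_proj_e w i : inF B w -> sgz (ip G (pi (e_ R i)) w) = sgz (w 0 i).
  by move=> wF; rewrite ip_proj_e // sgzM gtr0_sgz ?mul1r // (G_diag_gt0 G_ip).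
split=> [[f [/linear_on_F_riesz[w wF f_ip] ->]]|[w wF ->]].
  exists w => //; apply/ffunP => i.
  by rewrite !ffunE f_ip ?sgz_proj_e //; apply: proj_inF.
exists (fun x => ip G x w); split; first by move=> a x y _ _; apply: ip_linear_l.
by apply/ffunP => i; rewrite !ffunE sgz_proj_e.
Qed.

End Projection.

Theorem corollary1 (R : realType) (n k : nat) (B : 'M[int]_(k, n))
  (G : 'M[R]_n) (pi : 'rV[R]_n -> 'rV[R]_n) :
  (0 < n)%N ->
  Zindep B ->
  orth_basis_inner_product G ->
  zonotopal_lattice B ->
  orth_proj B G pi ->
  forall s : {ffun 'I_n -> int},
    covector_L B s <-> covector_Y B (fun i => pi (e_ R i)) s.
Proof.
move=> _ _ G_ip _ pi_proj s.
exact: iff_trans (covector_L_sgzP R B s) (iff_sym (covector_Y_sgzP G_ip pi_proj s)).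
Qed.
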